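(* Any two node-edge-checkable problems $P$ and $\Pi$ satisfy $\Pi\times\tau_P(\Pi)\xrightarrow{0}P$.
   Context: Fix $\Delta$. A node-edge-checkable problem $\Pi=(\Sigma_\Pi,\mathcal{N}_\Pi,\mathcal{E}_\Pi)$ has a finite label set, a node constraint $\mathcal{N}_\Pi$ (a set of cardinality-$\Delta$ multisets over $\Sigma_\Pi$) and an edge constraint $\mathcal{E}_\Pi$ (a set of cardinality-$2$ multisets). Relaxation. $\Pi\xrightarrow{0}\Pi'$ means there is a map $f$ with the following properties. For every $C=L_1\dots L_\Delta\in\mathcal{N}_\Pi$ and every $j$, $f$ assigns a label $f(C,j)\in\Sigma_{\Pi'}$. The map must satisfy: - $f(C,1)\dots f(C,\Delta)\in\mathcal{N}_{\Pi'}$; - whenever the $j$-th entry of $C$ and the $j'$-th entry of $C'$ form an element of $\mathcal{E}_\Pi$, then $f(C,j)f(C',j')\in\mathcal{E}_{\Pi'}$. Product. $\Pi\times\Pi'$ has labels $\Sigma_\Pi\times\Sigma_{\Pi'}$. Its node configurations are the multisets $(L_1,L'_1)\dots(L_\Delta,L'_\Delta)$ with $L_1\dots L_\Delta\in\mathcal{N}_\Pi$ and $L'_1\dots L'_\Delta\in\mathcal{N}_{\Pi'}$. Its edge configurations are defined analogously. The problem $\mathrm{R}^*(P)$ is defined as follows. - Labels are the nonempty subsets of $\Sigma_P$. - Node configurations are the $S_1\dots S_\Delta$ admitting $L_i\in S_i$ with $L_1\dots L_\Delta\in\mathcal{N}_P$. - Edge configurations are the $S_1S_2$ with $L_1L_2\in\mathcal{E}_P$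 for all $L_1\in S_1,L_2\in S_2$. The problem $\tau_P(\Pi)$ is defined as follows. - Labels are all functions $\Sigma_\Pi\to\Sigma_{\mathrm{R}^*(P)}$. - $f_1\dots f_\Delta$ is a node configuration iff $f_1(L_1)\dots f_\Delta(L_\Delta)\in\mathcal{N}_{\mathrm{R}^*(P)}$ for all $L_1\dots L_\Delta\in\mathcal{N}_\Pi$. - $f_1f_2$ is an edge configuration iff $f_1(L_1)f_2(L_2)\in\mathcal{E}_{\mathrm{R}^*(P)}$ for all $L_1L_2\in\mathcal{E}_\Pi$. *)

From mathcomp Require Import all_boot.
Set Implicit Arguments. Unset Strict Implicit. Unset Printing Implicit Defensive.

(* A configuration (multiset of cardinality Delta) is represented by a
   listing 'I_Delta -> label; the node constraint is required to be invariant
   under reordering (see [wf_problem]), so it really is a set of multisets.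
   Similarly the edge constraint is a symmetric relation (set of 2-multisets). *)
Record problem (Delta : nat) := Problem {
  lab : finType;
  node : ('I_Delta -> lab) -> Prop;
  edge : lab -> lab -> Prop }.
Arguments Problem {Delta}.
Arguments lab {Delta} p.
Arguments node {Delta} p _.
Arguments edge {Delta} p _ _.

Definition wf_problem Delta (P : problem Delta) : Prop :=
  (forall (C : 'I_Delta -> lab P) (s : 'I_Delta -> 'I_Delta),
      bijective s -> node P C -> node P (C \o s)) /\
  (forall a b, edge P a b -> edge P b a).

Definition relax0 Delta (Pi Pi' : problem Delta) : Prop :=
  exists f : {C : 'I_Delta -> lab Pi | node Pi C} -> 'I_Delta -> lab Pi',
    (forall C, node Pi' (f C)) /\
    (forall (C C' : {C : 'I_Delta -> lab Pi | node Pi C}) (j j' : 'I_Delta),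
        edge Pi (sval C j) (sval C' j') -> edge Pi' (f C j) (f C' j')).

Definition prod_problem Delta (Pi Pi' : problem Delta) : problem Delta :=
  @Problem Delta (lab Pi * lab Pi')%type
    (fun C => node Pi (fun i => (C i).1) /\ node Pi' (fun i => (C i).2))
    (fun a b => edge Pi a.1 b.1 /\ edge Pi' a.2 b.2).

Definition Rlab Delta (P : problem Delta) : finType :=
  {S : {set lab P} | S != set0}.

Definition Rstar Delta (P : problem Delta) : problem Delta :=
  @Problem Delta (Rlab P)
    (fun S => exists L : 'I_Delta -> lab P,
        (forall i, L i \in sval (S i)) /\ node P L)
    (fun S1 S2 => forall L1 L2, L1 \in sval S1 -> L2 \in sval S2 -> edge P L1 L2).

Definition tau Delta (P Pi : problem Delta) : problem Delta :=
  @Problem Delta {ffun lab Pi -> lab (Rstar P)}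
    (fun F => forall L : 'I_Delta -> lab Pi, node Pi L ->
        node (Rstar P) (fun i => F i (L i)))
    (fun f1 f2 => forall L1 L2, edge Pi L1 L2 -> edge (Rstar P) (f1 L1) (f2 L2)).

From mathcomp Require Import all_boot.
From Stdlib Require Import ClassicalEpsilon.

Set Implicit Arguments.
Unset Strict Implicit.
Unset Printing Implicit Defensive.

(* The labelling (L, f) |-> f(L) is a label-wise relaxation of
   Pi x tau_P(Pi) to R*(P): the node and edge constraints of tau_P(Pi) say
   precisely that it maps Pi-valid configurations to R*(P)-valid ones.  In
   turn R*(P) relaxes to P by choosing, in every node configuration of sets,
   a P-valid configuration of representatives; the edge constraint of R*(P)
   makes any such choice compatible along edges.  Relaxations compose. *)

Section Relaxation.

Variable Delta : nat.
Implicit Types P Pi : problem Delta.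

Lemma relax0_trans (Pi Pi' Pi'' : problem Delta) :
  relax0 Pi Pi' -> relax0 Pi' Pi'' -> relax0 Pi Pi''.
Proof.
case=> f [f_node f_edge] [g [g_node g_edge]].
exists (fun C => g (exist _ (f C) (f_node C))); split=> [C | C C' j j' e].
  exact: g_node.
by apply: g_edge; apply: f_edge.
Qed.

Lemma relax0_labelwise (Pi Pi' : problem Delta) (h : lab Pi -> lab Pi') :
  (forall C, node Pi C -> node Pi' (h \o C)) ->
  (forall a b, edge Pi a b -> edge Pi' (h a) (h b)) ->
  relax0 Pi Pi'.
Proof.
move=> h_node h_edge; exists (fun C => h \o sval C); split=> [C | C C' j j'].
  exact: h_node (svalP C).
exact: h_edge.
Qed.

Lemma Rstar_relax0 P : relax0 (Rstar P) P.
Proof.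
have pick (S : {S | node (Rstar P) S}) :
    {L | (forall i, L i \in sval (sval S i)) /\ node P L}.
  exact: constructive_indefinite_description (svalP S).
exists (fun S => sval (pick S)); split=> [S | S S' j j' e].
  by case: (svalP (pick S)).
have [memL _] := svalP (pick S); have [memL' _] := svalP (pick S').
exact: e (memL j) (memL' j').
Qed.

Lemma prod_tau_relax0_Rstar P Pi :
  relax0 (prod_problem Pi (tau P Pi)) (Rstar P).
Proof.
pose eval_at (a : lab (prod_problem Pi (tau P Pi))) : lab (Rstar P) := a.2 a.1.
apply: (@relax0_labelwise _ _ eval_at) => [C [C1_node C2_node] | a b [e1 e2]].
  exact: C2_node C1_node.
exact: e2 e1.
Qed.

End Relaxation.

Theorem mainTheorem9 (Delta : nat) (P Pi : problem Delta) :
  wf_problem P -> wf_problem Pi ->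
  relax0 (prod_problem Pi (tau P Pi)) P.
Proof.
move=> _ _.
exact: relax0_trans (prod_tau_relax0_Rstar P Pi) (Rstar_relax0 P).
Qed.
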